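(* Let $\Omega\subset\mathbb{R}^3$ be a domain, $q\in C(\Omega,\mathbb{C})$, and let $\varphi$ be a non-vanishing solution of $(-\Delta+q)\varphi=0$ in $\Omega$. Let $\mathbf w\in C^1(\Omega,\mathrm{Vec}\,\mathbb{H}(\mathbb{C}))$ be a purely vectorial solution of $$D\mathbf w+\mathbf w\,\frac{D\varphi}{\varphi}=0 \quad\text{in }\Omega.$$ Then $W_0=\tfrac12\varphi\,\mathcal A\!\left[\frac{\mathbf w}{\varphi}\right]$ is a solution of $(-\Delta+q)W_0=0$ in $\Omega$, and, wherever $\mathcal A\!\left[\frac{\mathbf w}{\varphi}\right]$ does not vanish, $$\mathbf Q=-\varphi^{-1}\left(\mathrm{grad}\,\varphi+\frac{\mathbf w}{\mathcal A\left[\frac{\mathbf w}{\varphi}\right]}\right)$$ is a solution of the Riccati equation $D\mathbf Q+|\mathbf Q|^2=q$.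
   Context: $\mathbb{H}(\mathbb{C})$ denotes the complex quaternions: elements $x=\sum_{\ell=0}^3x_\ell e_\ell$ with $x_\ell\in\mathbb{C}$, $e_0=1$, $e_pe_q=-\delta_{pq}+\varepsilon_{pqr}e_r$ for $p,q,r\in\{1,2,3\}$, and $i$ commuting with all $e_\ell$; $\mathrm{Vec}\,x=\sum_{j=1}^3x_je_j$. For a vector $\mathbf Q$, $|\mathbf Q|^2=-\mathbf Q^2=\sum_jQ_j^2$. The Dirac operator is $D\varphi=\sum_{k=1}^3e_k\partial_k\varphi$ (for scalar $\varphi$, $D\varphi=\mathrm{grad}\,\varphi$). For a curl-free vector function $\boldsymbol\psi=\sum\psi_ke_k$, $\mathcal A[\boldsymbol\psi](x,y,z)=\int_{x_0}^x\psi_1(\xi,y_0,z_0)d\xi+\int_{y_0}^y\psi_2(x,\eta,z_0)d\eta+\int_{z_0}^z\psi_3(x,y,\zeta)d\zeta+C$, a scalar potential of $\boldsymbol\psi$ ($(x_0,y_0,z_0)\in\Omega$ fixed, $C$ an arbitrary complex constant); the hypothesis on $\mathbf w$ implies $\mathrm{rot}(\mathbf w/\varphi)=0$, and $\Omega$ is assumed such that $\mathcal A[\mathbf w/\varphi]$ is well defined. *)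

From Stdlib Require Import Reals.
Open Scope R_scope.

Record Cx := mkC { Re : R; Im : R }.
Definition C0 : Cx := mkC 0 0.
Definition C1 : Cx := mkC 1 0.
Definition Cadd (a b : Cx) : Cx := mkC (Re a + Re b) (Im a + Im b).
Definition Copp (a : Cx) : Cx := mkC (- Re a) (- Im a).
Definition Cmul (a b : Cx) : Cx :=
  mkC (Re a * Re b - Im a * Im b) (Re a * Im b + Im a * Re b).
Definition Cinv (a : Cx) : Cx :=
  let d := Re a * Re a + Im a * Im a in mkC (Re a / d) (- Im a / d).
Definition CofR (r : R) : Cx := mkC r 0.

(* x = h0 e0 + h1 e1 + h2 e2 + h3 e3, e_p e_q = -delta_pq + eps_pqr e_r *)
Record HC := mkH { h0 : Cx; h1 : Cx; h2 : Cx; h3 : Cx }.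
Definition H0 : HC := mkH C0 C0 C0 C0.
Definition Hadd (a b : HC) : HC :=
  mkH (Cadd (h0 a) (h0 b)) (Cadd (h1 a) (h1 b)) (Cadd (h2 a) (h2 b)) (Cadd (h3 a) (h3 b)).
Definition Hmul (a b : HC) : HC :=
  mkH (Cadd (Cadd (Cmul (h0 a) (h0 b)) (Copp (Cmul (h1 a) (h1 b))))
            (Cadd (Copp (Cmul (h2 a) (h2 b))) (Copp (Cmul (h3 a) (h3 b)))))
      (Cadd (Cadd (Cmul (h0 a) (h1 b)) (Cmul (h1 a) (h0 b)))
            (Cadd (Cmul (h2 a) (h3 b)) (Copp (Cmul (h3 a) (h2 b)))))
      (Cadd (Cadd (Cmul (h0 a) (h2 b)) (Cmul (h2 a) (h0 b)))
            (Cadd (Cmul (h3 a) (h1 b)) (Copp (Cmul (h1 a) (h3 b)))))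
      (Cadd (Cadd (Cmul (h0 a) (h3 b)) (Cmul (h3 a) (h0 b)))
            (Cadd (Cmul (h1 a) (h2 b)) (Copp (Cmul (h2 a) (h1 b))))).
Definition Hscalar (c : Cx) : HC := mkH c C0 C0 C0.
Definition Hvec (a b c : Cx) : HC := mkH C0 a b c.
Definition e1 : HC := Hvec C1 C0 C0.
Definition e2 : HC := Hvec C0 C1 C0.
Definition e3 : HC := Hvec C0 C0 C1.

Definition R3 : Type := (R * R * R)%type.
Inductive dir := d1 | d2 | d3.

Definition shift (p : R3) (k : dir) (t : R) : R3 :=
  match p with (x, y, z) =>
    match k with
    | d1 => (x + t, y, z)
    | d2 => (x, y + t, z)
    | d3 => (x, y, z + t)
    end
  end.

Definition dist3 (p p' : R3) : R :=
  match p, p' with (x, y, z), (x', y', z') =>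
    Rmax (Rabs (x - x')) (Rmax (Rabs (y - y')) (Rabs (z - z'))) end.

Definition has_pdR (f : R3 -> R) (p : R3) (k : dir) (l : R) : Prop :=
  derivable_pt_lim (fun t => f (shift p k t)) 0 l.
Definition has_pdC (f : R3 -> Cx) (p : R3) (k : dir) (l : Cx) : Prop :=
  has_pdR (fun q => Re (f q)) p k (Re l) /\ has_pdR (fun q => Im (f q)) p k (Im l).
Definition has_pdH (f : R3 -> HC) (p : R3) (k : dir) (l : HC) : Prop :=
  has_pdC (fun q => h0 (f q)) p k (h0 l) /\ has_pdC (fun q => h1 (f q)) p k (h1 l) /\
  has_pdC (fun q => h2 (f q)) p k (h2 l) /\ has_pdC (fun q => h3 (f q)) p k (h3 l).

(* Dirac operator applied to the partial derivatives: sum_k e_k d_k *)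
Definition Dsum (d : dir -> HC) : HC :=
  Hadd (Hadd (Hmul e1 (d d1)) (Hmul e2 (d d2))) (Hmul e3 (d d3)).
Definition gradH (d : dir -> Cx) : HC := Hvec (d d1) (d d2) (d d3).

Definition openS (Om : R3 -> Prop) : Prop :=
  forall p, Om p -> exists eps, 0 < eps /\ forall p', dist3 p p' < eps -> Om p'.
Definition rel_open (Om U : R3 -> Prop) : Prop :=
  forall p, U p -> exists eps, 0 < eps /\ forall p', Om p' -> dist3 p p' < eps -> U p'.
Definition connectedS (Om : R3 -> Prop) : Prop :=
  forall U V : R3 -> Prop,
    (forall p, Om p <-> (U p \/ V p)) -> (forall p, ~ (U p /\ V p)) ->
    rel_open Om U -> rel_open Om V ->
    (forall p, ~ U p) \/ (forall p, ~ V p).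
Definition is_domain (Om : R3 -> Prop) : Prop := openS Om /\ connectedS Om.

Definition contC (Om : R3 -> Prop) (f : R3 -> Cx) : Prop :=
  forall p, Om p -> forall eps, 0 < eps -> exists del, 0 < del /\
    forall p', Om p' -> dist3 p p' < del ->
      Rabs (Re (f p') - Re (f p)) < eps /\ Rabs (Im (f p') - Im (f p)) < eps.
Definition C1C (Om : R3 -> Prop) (f : R3 -> Cx) : Prop :=
  contC Om f /\ exists df : dir -> R3 -> Cx,
    (forall k p, Om p -> has_pdC f p k (df k p)) /\ (forall k, contC Om (df k)).
Definition C2C (Om : R3 -> Prop) (f : R3 -> Cx) : Prop :=
  contC Om f /\ exists df : dir -> R3 -> Cx,
    (forall k p, Om p -> has_pdC f p k (df k p)) /\ (forall k, C1C Om (df k)).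
Definition C1H (Om : R3 -> Prop) (f : R3 -> HC) : Prop :=
  C1C Om (fun p => h0 (f p)) /\ C1C Om (fun p => h1 (f p)) /\
  C1C Om (fun p => h2 (f p)) /\ C1C Om (fun p => h3 (f p)).

Definition schr_solution (Om : R3 -> Prop) (q f : R3 -> Cx) : Prop :=
  C2C Om f /\
  forall p, Om p -> exists (df : dir -> R3 -> Cx) (dd : dir -> Cx),
    (forall k p', Om p' -> has_pdC f p' k (df k p')) /\
    (forall k, has_pdC (df k) p k (dd k)) /\
    Cadd (Copp (Cadd (Cadd (dd d1) (dd d2)) (dd d3))) (Cmul (q p) (f p)) = C0.

Definition is_RInt_C (g : R -> Cx) (a b : R) (v : Cx) : Prop :=
  (exists pr : Riemann_integrable (fun t => Re (g t)) a b, RiemannInt pr = Re v) /\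
  (exists pr : Riemann_integrable (fun t => Im (g t)) a b, RiemannInt pr = Im v).

(* Phi = A[psi] on Om, with base point (x0,y0,z0) and constant c, where
   psi = psi1 e1 + psi2 e2 + psi3 e3 *)
Definition is_A (Om : R3 -> Prop) (psi1 psi2 psi3 : R3 -> Cx)
    (x0 y0 z0 : R) (c : Cx) (Phi : R3 -> Cx) : Prop :=
  forall x y z, Om (x, y, z) -> exists v1 v2 v3 : Cx,
    is_RInt_C (fun xi => psi1 (xi, y0, z0)) x0 x v1 /\
    is_RInt_C (fun eta => psi2 (x, eta, z0)) y0 y v2 /\
    is_RInt_C (fun zeta => psi3 (x, y, zeta)) z0 z v3 /\
    Phi (x, y, z) = Cadd (Cadd (Cadd v1 v2) v3) c.

Definition A_segments_in (Om : R3 -> Prop) (x0 y0 z0 : R) : Prop :=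
  forall x y z, Om (x, y, z) ->
    (forall s, Rmin x0 x <= s <= Rmax x0 x -> Om (s, y0, z0)) /\
    (forall s, Rmin y0 y <= s <= Rmax y0 y -> Om (x, s, z0)) /\
    (forall s, Rmin z0 z <= s <= Rmax z0 z -> Om (x, y, s)).

From Pilot Require Import Defs.
From Stdlib Require Import Reals Lra Psatz.
From Coquelicot Require Import Coquelicot.
(* Coquelicot's complex numbers shadow [Re] and [Im]; restore those of [Cx]. *)
Import Pilot.Defs.
Open Scope R_scope.

(* The vector part of [D w + w (D phi) / phi = 0] is the relation
   [curl w = (grad phi x w) / phi], which says exactly that [w / phi] is curl free.  Hence
   [Phi = A[w / phi]] is a genuine potential, [grad Phi = w / phi]: differentiate the three
   line integrals under the integral sign and use the symmetry of the Jacobian of [w / phi].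
   The scalar part gives [div w = - (w . grad phi) / phi], and together with
   [Delta phi = q phi] the product rule yields [Delta (phi Phi) = q phi Phi].  Once
   [grad Phi = w / phi] is known, the Riccati equation for
   [Q = - phi^-1 (grad phi + w / Phi)] is a pointwise identity in these relations and the
   symmetry of the Hessian of [phi]. *)

Lemma Cx_eq (a b : Cx) : Re a = Re b -> Im a = Im b -> a = b.
Proof. destruct a, b; simpl; intros; subst; reflexivity. Qed.

Definition Csub (a b : Cx) : Cx := Cadd a (Copp b).
Definition Cdiv (a b : Cx) : Cx := Cmul a (Cinv b).
Definition Csum3 (f : dir -> Cx) : Cx := Cadd (Cadd (f d1) (f d2)) (f d3).

Lemma Cring : ring_theory C0 C1 Cadd Cmul Csub Copp (@eq Cx).
Proof. constructor; intros; apply Cx_eq; unfold Csub; simpl; ring. Qed.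

Lemma Cnorm2_neq0 (a : Cx) : a <> C0 -> Re a * Re a + Im a * Im a <> 0.
Proof.
  destruct a as [x y]; simpl; intros Ha E; apply Ha.
  assert (x = 0) by nra; assert (y = 0) by nra; subst; reflexivity.
Qed.

Lemma Cfield : field_theory C0 C1 Cadd Cmul Csub Copp Cdiv Cinv (@eq Cx).
Proof.
  constructor.
  - exact Cring.
  - intro E; injection E; lra.
  - reflexivity.
  - intros a Ha; pose proof (Cnorm2_neq0 a Ha).
    apply Cx_eq; simpl; field; assumption.
Qed.

Add Field Cx_field : Cfield.

Lemma shift0 p k : shift p k 0 = p.
Proof. destruct p as [[x y] z], k; simpl; rewrite Rplus_0_r; reflexivity. Qed.

Lemma shift_add p k s t : shift (shift p k s) k t = shift p k (s + t).
Proof. destruct p as [[x y] z], k; simpl; rewrite Rplus_assoc; reflexivity. Qed.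

Lemma shift_comm p j k s t : shift (shift p j s) k t = shift (shift p k t) j s.
Proof.
  destruct p as [[x y] z], j, k; simpl; try reflexivity;
  rewrite !Rplus_assoc, (Rplus_comm s t); reflexivity.
Qed.

Lemma dist3_shift p k t : dist3 p (shift p k t) = Rabs t.
Proof.
  destruct p as [[x y] z], k; simpl;
  repeat match goal with |- context [?a - ?a] => rewrite (Rminus_diag a) end;
  match goal with |- context [?a - (?a + t)] =>
    replace (a - (a + t)) with (- t) by ring end;
  rewrite Rabs_R0, Rabs_Ropp; pose proof (Rabs_pos t);
  unfold Rmax; repeat destruct Rle_dec; lra.
Qed.

Lemma dist3_triangle p q r : dist3 p r <= dist3 p q + dist3 q r.
Proof.
  destruct p as [[x y] z], q as [[a b] c], r as [[u v] w]; simpl.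
  pose proof (Rabs_triang (x - a) (a - u)).
  pose proof (Rabs_triang (y - b) (b - v)).
  pose proof (Rabs_triang (z - c) (c - w)).
  replace (x - a + (a - u)) with (x - u) in * by ring.
  replace (y - b + (b - v)) with (y - v) in * by ring.
  replace (z - c + (c - w)) with (z - w) in * by ring.
  unfold Rmax; repeat destruct Rle_dec; lra.
Qed.

Lemma dist3_lt x y z a b c e :
  Rabs (x - a) < e -> Rabs (y - b) < e -> Rabs (z - c) < e -> dist3 (x, y, z) (a, b, c) < e.
Proof. simpl; unfold Rmax; repeat destruct Rle_dec; lra. Qed.

Lemma dist3_lt_inv x y z a b c e : dist3 (x, y, z) (a, b, c) < e ->
  Rabs (x - a) < e /\ Rabs (y - b) < e /\ Rabs (z - c) < e.
Proof. simpl; unfold Rmax; repeat destruct Rle_dec; lra. Qed.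

Lemma openS_shift Om p k : openS Om -> Om p ->
  exists e, 0 < e /\ forall t, Rabs t < e -> Om (shift p k t).
Proof.
  intros HO Hp; destruct (HO p Hp) as [e [He Hball]]; exists e; split; auto.
  intros t Ht; apply Hball; rewrite dist3_shift; assumption.
Qed.

Lemma openS_box Om x y z : openS Om -> Om (x, y, z) ->
  exists e, 0 < e /\ forall a b c,
    Rabs (a - x) < e -> Rabs (b - y) < e -> Rabs (c - z) < e -> Om (a, b, c).
Proof.
  intros HO Hp; destruct (HO _ Hp) as [e [He Hball]]; exists e; split; auto.
  intros a b c Ha Hb Hc; apply Hball; apply dist3_lt; rewrite Rabs_minus_sym; assumption.
Qed.

(** * Partial derivatives *)

Lemma locally_R (x : R) (P : R -> Prop) :
  (exists e, 0 < e /\ forall y, Rabs (y - x) < e -> P y) -> locally x P.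
Proof.
  intros [e [He H]]; exists (mkposreal e He); intros y Hy; apply H; exact Hy.
Qed.

Lemma derivable_pt_lim_translate (h : R -> R) a l :
  derivable_pt_lim (fun t => h (a + t)) 0 l <-> derivable_pt_lim h a l.
Proof.
  unfold derivable_pt_lim; split; intros H eps He;
  destruct (H eps He) as [d Hd]; exists d; intros t Ht1 Ht2; specialize (Hd t Ht1 Ht2).
  - rewrite Rplus_0_l, Rplus_0_r in Hd; exact Hd.
  - rewrite Rplus_0_l, Rplus_0_r; exact Hd.
Qed.

Lemma has_pdR_d1 f x y z l : has_pdR f (x, y, z) d1 l <-> is_derive (fun u => f (u, y, z)) x l.
Proof.
  unfold has_pdR; simpl; rewrite is_derive_Reals.
  apply (derivable_pt_lim_translate (fun u => f (u, y, z))).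
Qed.

Lemma has_pdR_d2 f x y z l : has_pdR f (x, y, z) d2 l <-> is_derive (fun u => f (x, u, z)) y l.
Proof.
  unfold has_pdR; simpl; rewrite is_derive_Reals.
  apply (derivable_pt_lim_translate (fun u => f (x, u, z))).
Qed.

Lemma has_pdR_d3 f x y z l : has_pdR f (x, y, z) d3 l <-> is_derive (fun u => f (x, y, u)) z l.
Proof.
  unfold has_pdR; simpl; rewrite is_derive_Reals.
  apply (derivable_pt_lim_translate (fun u => f (x, y, u))).
Qed.

Lemma has_pdR_eq f p k l l' : has_pdR f p k l -> l = l' -> has_pdR f p k l'.
Proof. intros H <-; exact H. Qed.

Lemma has_pdR_const a p k : has_pdR (fun _ => a) p k 0.
Proof. apply (derivable_pt_lim_const a 0). Qed.

Lemma has_pdR_plus f g p k l m : has_pdR f p k l -> has_pdR g p k m ->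
  has_pdR (fun q => f q + g q) p k (l + m).
Proof. apply derivable_pt_lim_plus. Qed.

Lemma has_pdR_minus f g p k l m : has_pdR f p k l -> has_pdR g p k m ->
  has_pdR (fun q => f q - g q) p k (l - m).
Proof. apply derivable_pt_lim_minus. Qed.

Lemma has_pdR_opp f p k l : has_pdR f p k l -> has_pdR (fun q => - f q) p k (- l).
Proof. apply derivable_pt_lim_opp. Qed.

Lemma has_pdR_mult f g p k l m : has_pdR f p k l -> has_pdR g p k m ->
  has_pdR (fun q => f q * g q) p k (l * g p + f p * m).
Proof.
  intros Hf Hg; pose proof (derivable_pt_lim_mult _ _ _ _ _ Hf Hg) as H.
  cbv beta in H; rewrite shift0 in H; exact H.
Qed.

Lemma has_pdR_div f g p k l m : has_pdR f p k l -> has_pdR g p k m -> g p <> 0 ->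
  has_pdR (fun q => f q / g q) p k ((l * g p - m * f p) / (g p)²).
Proof.
  intros Hf Hg Hgp.
  assert (Hg0 : (fun t => g (shift p k t)) 0 <> 0) by (cbv beta; rewrite shift0; exact Hgp).
  pose proof (derivable_pt_lim_div _ _ _ _ _ Hf Hg Hg0) as H.
  cbv beta in H; rewrite shift0 in H; exact H.
Qed.

Lemma has_pdR_unique f p k l m : has_pdR f p k l -> has_pdR f p k m -> l = m.
Proof. apply uniqueness_limite. Qed.

Lemma has_pdR_local f g p k l :
  (exists e, 0 < e /\ forall t, Rabs t < e -> f (shift p k t) = g (shift p k t)) ->
  has_pdR f p k l -> has_pdR g p k l.
Proof.
  intros [e [He Hfg]] Hf; unfold has_pdR in *.
  apply is_derive_Reals in Hf; apply is_derive_Reals.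
  apply (is_derive_ext_loc (fun t => f (shift p k t))); auto.
  apply locally_R; exists e; split; auto; intros t Ht; apply Hfg.
  rewrite Rminus_0_r in Ht; exact Ht.
Qed.

Lemma has_pdR_open Om f g p k l : openS Om -> Om p ->
  (forall q, Om q -> f q = g q) -> has_pdR f p k l -> has_pdR g p k l.
Proof.
  intros HO Hp Hfg; apply has_pdR_local.
  destruct (openS_shift Om p k HO Hp) as [e [He Hin]]; exists e; auto.
Qed.

Lemma has_pdC_eq f p k l l' : has_pdC f p k l -> l = l' -> has_pdC f p k l'.
Proof. intros H <-; exact H. Qed.

Lemma has_pdC_const a p k : has_pdC (fun _ => a) p k C0.
Proof. split; apply has_pdR_const. Qed.

Lemma has_pdC_add f g p k l m : has_pdC f p k l -> has_pdC g p k m ->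
  has_pdC (fun q => Cadd (f q) (g q)) p k (Cadd l m).
Proof. intros [? ?] [? ?]; split; apply has_pdR_plus; assumption. Qed.

Lemma has_pdC_opp f p k l : has_pdC f p k l -> has_pdC (fun q => Copp (f q)) p k (Copp l).
Proof. intros [? ?]; split; apply has_pdR_opp; assumption. Qed.

Lemma has_pdC_mul f g p k l m : has_pdC f p k l -> has_pdC g p k m ->
  has_pdC (fun q => Cmul (f q) (g q)) p k (Cadd (Cmul l (g p)) (Cmul (f p) m)).
Proof.
  intros [? ?] [? ?]; split; simpl.
  - eapply has_pdR_eq; [apply has_pdR_minus; apply has_pdR_mult; eassumption|]; simpl; ring.
  - eapply has_pdR_eq; [apply has_pdR_plus; apply has_pdR_mult; eassumption|]; simpl; ring.
Qed.

Lemma has_pdC_inv f p k l : has_pdC f p k l -> f p <> C0 ->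
  has_pdC (fun q => Cinv (f q)) p k (Copp (Cmul l (Cmul (Cinv (f p)) (Cinv (f p))))).
Proof.
  intros [HRe HIm] Hfp; pose proof (Cnorm2_neq0 _ Hfp).
  assert (Hn : has_pdR (fun q => Re (f q) * Re (f q) + Im (f q) * Im (f q)) p k
     (Re l * Re (f p) + Re (f p) * Re l + (Im l * Im (f p) + Im (f p) * Im l)))
    by (apply has_pdR_plus; apply has_pdR_mult; assumption).
  split; simpl.
  - eapply has_pdR_eq; [apply has_pdR_div; eassumption|].
    unfold Rsqr; simpl; field; assumption.
  - eapply has_pdR_eq;
      [apply has_pdR_div; [apply has_pdR_opp; eassumption|eassumption|assumption]|].
    unfold Rsqr; simpl; field; assumption.
Qed.

Lemma has_pdC_unique f p k l m : has_pdC f p k l -> has_pdC f p k m -> l = m.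
Proof. intros [? ?] [? ?]; apply Cx_eq; eapply has_pdR_unique; eassumption. Qed.

Lemma has_pdC_local f g p k l :
  (exists e, 0 < e /\ forall t, Rabs t < e -> f (shift p k t) = g (shift p k t)) ->
  has_pdC f p k l -> has_pdC g p k l.
Proof.
  intros [e [He Hfg]] [HRe HIm]; split;
  [eapply (has_pdR_local (fun q => Re (f q))) | eapply (has_pdR_local (fun q => Im (f q)))];
  try eassumption; exists e; split; auto; intros t Ht; rewrite Hfg; auto.
Qed.

Lemma has_pdC_open Om f g p k l : openS Om -> Om p ->
  (forall q, Om q -> f q = g q) -> has_pdC f p k l -> has_pdC g p k l.
Proof.
  intros HO Hp Hfg; apply has_pdC_local.
  destruct (openS_shift Om p k HO Hp) as [e [He Hin]]; exists e; auto.
Qed.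

Lemma has_pdC_unique_open Om f g p k l m : openS Om -> Om p ->
  (forall q, Om q -> f q = g q) -> has_pdC f p k l -> has_pdC g p k m -> l = m.
Proof. intros HO Hp Hfg Hf; apply has_pdC_unique; eapply has_pdC_open; eassumption. Qed.

Definition contR_at (Om : R3 -> Prop) (g : R3 -> R) (p : R3) : Prop :=
  forall eps, 0 < eps -> exists del, 0 < del /\
    forall q, Om q -> dist3 p q < del -> Rabs (g q - g p) < eps.
Definition contC_at (Om : R3 -> Prop) (f : R3 -> Cx) (p : R3) : Prop :=
  contR_at Om (fun q => Re (f q)) p /\ contR_at Om (fun q => Im (f q)) p.

Lemma contC_at_of Om f p : contC Om f -> Om p -> contC_at Om f p.
Proof.
  intros H Hp; split; intros eps He; destruct (H p Hp eps He) as [d [Hd H']];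
  exists d; split; auto; intros q Hq Hpq; apply H'; auto.
Qed.

Lemma contC_of_at Om f : (forall p, Om p -> contC_at Om f p) -> contC Om f.
Proof.
  intros H p Hp eps He; destruct (H p Hp) as [HRe HIm].
  destruct (HRe eps He) as [a [Ha Ka]]; destruct (HIm eps He) as [b [Hb Kb]].
  exists (Rmin a b); split; [apply Rmin_pos; auto|].
  intros q Hq Hpq; pose proof (Rmin_l a b); pose proof (Rmin_r a b).
  split; [apply Ka|apply Kb]; auto; lra.
Qed.

Lemma contR_at_comp2 Om g1 g2 (h : R -> R -> R) p :
  contR_at Om g1 p -> contR_at Om g2 p -> continuity_2d_pt h (g1 p) (g2 p) ->
  contR_at Om (fun q => h (g1 q) (g2 q)) p.
Proof.
  intros H1 H2 H eps He.
  destruct (H (mkposreal eps He)) as [d Hd].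
  destruct (H1 d (cond_pos d)) as [a [Ha Ka]]; destruct (H2 d (cond_pos d)) as [b [Hb Kb]].
  exists (Rmin a b); split; [apply Rmin_pos; auto|].
  intros q Hq Hpq; pose proof (Rmin_l a b); pose proof (Rmin_r a b).
  apply (Hd (g1 q) (g2 q)); [apply Ka|apply Kb]; auto; lra.
Qed.

Lemma contR_at_const Om a p : contR_at Om (fun _ => a) p.
Proof.
  intros eps He; exists 1; split; [lra|]; intros; rewrite Rminus_diag, Rabs_R0; exact He.
Qed.

Lemma contR_at_plus Om f g p : contR_at Om f p -> contR_at Om g p ->
  contR_at Om (fun q => f q + g q) p.
Proof.
  intros; apply (contR_at_comp2 Om f g (fun u v => u + v)); auto.
  apply continuity_2d_pt_plus; [apply continuity_2d_pt_id1|apply continuity_2d_pt_id2].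
Qed.

Lemma contR_at_minus Om f g p : contR_at Om f p -> contR_at Om g p ->
  contR_at Om (fun q => f q - g q) p.
Proof.
  intros; apply (contR_at_comp2 Om f g (fun u v => u - v)); auto.
  apply continuity_2d_pt_minus; [apply continuity_2d_pt_id1|apply continuity_2d_pt_id2].
Qed.

Lemma contR_at_mult Om f g p : contR_at Om f p -> contR_at Om g p ->
  contR_at Om (fun q => f q * g q) p.
Proof.
  intros; apply (contR_at_comp2 Om f g (fun u v => u * v)); auto.
  apply continuity_2d_pt_mult; [apply continuity_2d_pt_id1|apply continuity_2d_pt_id2].
Qed.

Lemma contR_at_opp Om f p : contR_at Om f p -> contR_at Om (fun q => - f q) p.
Proof.
  intros; apply (contR_at_comp2 Om f f (fun u _ => - u)); auto.
  apply continuity_2d_pt_opp; apply continuity_2d_pt_id1.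
Qed.

Lemma contR_at_div Om f g p : contR_at Om f p -> contR_at Om g p -> g p <> 0 ->
  contR_at Om (fun q => f q / g q) p.
Proof.
  intros Hf Hg Hgp; apply contR_at_mult; auto.
  apply (contR_at_comp2 Om g g (fun u _ => / u)); auto.
  apply continuity_2d_pt_inv; auto; apply continuity_2d_pt_id1.
Qed.

Lemma contR_at_ext Om f g p : Om p -> (forall q, Om q -> f q = g q) ->
  contR_at Om f p -> contR_at Om g p.
Proof.
  intros Hp E H eps He; destruct (H eps He) as [d [Hd H']]; exists d; split; auto.
  intros q Hq Hpq; rewrite <- !E; auto.
Qed.

Lemma contC_at_const Om a p : contC_at Om (fun _ => a) p.
Proof. split; apply contR_at_const. Qed.

Lemma contC_at_add Om f g p : contC_at Om f p -> contC_at Om g p ->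
  contC_at Om (fun q => Cadd (f q) (g q)) p.
Proof. intros [? ?] [? ?]; split; apply contR_at_plus; assumption. Qed.

Lemma contC_at_opp Om f p : contC_at Om f p -> contC_at Om (fun q => Copp (f q)) p.
Proof. intros [? ?]; split; apply contR_at_opp; assumption. Qed.

Lemma contC_at_mul Om f g p : contC_at Om f p -> contC_at Om g p ->
  contC_at Om (fun q => Cmul (f q) (g q)) p.
Proof.
  intros [? ?] [? ?]; split; simpl;
  [apply contR_at_minus|apply contR_at_plus]; apply contR_at_mult; assumption.
Qed.

Lemma contC_at_inv Om f p : contC_at Om f p -> f p <> C0 ->
  contC_at Om (fun q => Cinv (f q)) p.
Proof.
  intros [HRe HIm] Hfp; pose proof (Cnorm2_neq0 _ Hfp).
  assert (contR_at Om (fun q => Re (f q) * Re (f q) + Im (f q) * Im (f q)) p)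
    by (apply contR_at_plus; apply contR_at_mult; assumption).
  split; simpl; apply contR_at_div; auto; apply contR_at_opp; assumption.
Qed.

(** * Integrals depending on a parameter *)

Definition nonexpanding2 (L : R -> R -> R3) : Prop :=
  forall u v u' v', dist3 (L u v) (L u' v') <= Rmax (Rabs (u - u')) (Rabs (v - v')).

Lemma continuity_2d_pt_snd f x t : continuity_2d_pt f x t -> continuous (fun v => f x v) t.
Proof.
  intros H; apply continuity_pt_filterlim.
  unfold continuity_pt, continue_in, limit1_in, limit_in; simpl; unfold R_dist.
  intros eps He; destruct (H (mkposreal eps He)) as [d Hd]; exists d; split; [apply cond_pos|].
  intros u [_ Hu]; apply Hd; auto; rewrite Rminus_diag, Rabs_R0; apply cond_pos.
Qed.

Lemma continuity_2d_pt_ext_loc f g x t :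
  (exists e, 0 < e /\ forall u v, Rabs (u - x) < e -> Rabs (v - t) < e -> f u v = g u v) ->
  continuity_2d_pt g x t -> continuity_2d_pt f x t.
Proof.
  intros [e [He E]] H eps; destruct (H eps) as [d Hd].
  assert (Hde : 0 < Rmin d e) by (apply Rmin_pos; [apply cond_pos|auto]).
  exists (mkposreal _ Hde); simpl; intros u v Hu Hv.
  pose proof (Rmin_l d e); pose proof (Rmin_r d e).
  rewrite (E u v), (E x t) by (rewrite ?Rminus_diag, ?Rabs_R0; lra).
  apply Hd; lra.
Qed.

Lemma nonexpanding2_open Om L x t : openS Om -> nonexpanding2 L -> Om (L x t) ->
  exists e, 0 < e /\ forall u v, Rabs (u - x) < e -> Rabs (v - t) < e -> Om (L u v).
Proof.
  intros HO HL Hp; destruct (HO _ Hp) as [e [He H]]; exists e; split; auto.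
  intros u v Hu Hv; apply H; eapply Rle_lt_trans; [apply HL|].
  rewrite (Rabs_minus_sym x u), (Rabs_minus_sym t v); unfold Rmax; destruct Rle_dec; auto.
Qed.

Lemma continuity_2d_pt_plane Om L h x t : openS Om -> nonexpanding2 L -> Om (L x t) ->
  contR_at Om h (L x t) -> continuity_2d_pt (fun u v => h (L u v)) x t.
Proof.
  intros HO HL Hp Hc eps.
  destruct (Hc eps (cond_pos eps)) as [d [Hd H]].
  destruct (HO _ Hp) as [e [He Hball]].
  assert (Hde : 0 < Rmin d e) by (apply Rmin_pos; auto).
  exists (mkposreal _ Hde); simpl; intros u v Hu Hv.
  pose proof (Rmin_l d e); pose proof (Rmin_r d e).
  assert (Hdist : dist3 (L x t) (L u v) < Rmin d e).
  { eapply Rle_lt_trans; [apply HL|].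
    rewrite (Rabs_minus_sym x u), (Rabs_minus_sym t v); unfold Rmax; destruct Rle_dec; auto. }
  apply H; [apply Hball|]; lra.
Qed.

Section PlaneIntegrals.

Variables (Om : R3 -> Prop) (L : R -> R -> R3).
Hypotheses (Om_open : openS Om) (L_nonexpanding : nonexpanding2 L).

Lemma is_derive_RInt_plane (h Dh : R3 -> R) x a b :
  (forall q, Om q -> contR_at Om h q) -> (forall q, Om q -> contR_at Om Dh q) ->
  (forall u t, Om (L u t) -> is_derive (fun u' => h (L u' t)) u (Dh (L u t))) ->
  (exists e, 0 < e /\ forall u, Rabs (u - x) < e ->
     forall t, Rmin a b <= t <= Rmax a b -> Om (L u t)) ->
  is_derive (fun u => RInt (fun t => h (L u t)) a b) x (RInt (fun t => Dh (L x t)) a b).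
Proof.
  intros Hc HDc Hd [e [He HS]].
  assert (Hx : forall t, Rmin a b <= t <= Rmax a b -> Om (L x t))
    by (intros; apply HS; auto; rewrite Rminus_diag, Rabs_R0; auto).
  replace (RInt (fun t => Dh (L x t)) a b)
    with (RInt (fun t => Derive (fun u => h (L u t)) x) a b)
    by (apply RInt_ext; intros t Ht; apply is_derive_unique, Hd, Hx; lra).
  apply (is_derive_RInt_param (fun u t => h (L u t))).
  - apply locally_R; exists e; split; auto; intros u Hu t Ht.
    exists (Dh (L u t)); apply Hd, HS; auto.
  - intros t Ht; apply (continuity_2d_pt_ext_loc _ (fun u v => Dh (L u v))).
    + destruct (nonexpanding2_open Om L x t Om_open L_nonexpanding (Hx t Ht)) as [e1 [He1 N]].
      exists e1; split; auto; intros u v Hu Hv; apply is_derive_unique, Hd, N; auto.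
    + apply (continuity_2d_pt_plane Om); auto.
  - apply locally_R; exists e; split; auto; intros u Hu.
    apply (@ex_RInt_continuous R_CompleteNormedModule); intros t Ht.
    apply (continuity_2d_pt_snd (fun u v => h (L u v))).
    apply (continuity_2d_pt_plane Om); auto.
Qed.

Lemma RInt_plane_derive (h Dh : R3 -> R) x a b :
  (forall q, Om q -> contR_at Om Dh q) ->
  (forall u t, Om (L u t) -> is_derive (fun t' => h (L u t')) t (Dh (L u t))) ->
  (forall t, Rmin a b <= t <= Rmax a b -> Om (L x t)) ->
  RInt (fun t => Dh (L x t)) a b = h (L x b) - h (L x a).
Proof.
  intros HDc Hd Hx; apply is_RInt_unique.
  apply (is_RInt_derive (fun t => h (L x t)) (fun t => Dh (L x t))).
  - intros t Ht; apply Hd; auto.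
  - intros t Ht; apply (continuity_2d_pt_snd (fun u v => Dh (L u v))).
    apply (continuity_2d_pt_plane Om); auto.
Qed.

Lemma is_derive_RInt_plane_upper (h : R3 -> R) x a b :
  (forall q, Om q -> contR_at Om h q) ->
  (exists e, 0 < e /\ forall u, Rabs (u - b) < e ->
     forall t, Rmin a u <= t <= Rmax a u -> Om (L x t)) ->
  is_derive (fun u => RInt (fun t => h (L x t)) a u) b (h (L x b)).
Proof.
  intros Hc [e [He HS]].
  apply (@is_derive_RInt R_CompleteNormedModule (fun t => h (L x t))
           (fun u => RInt (fun t => h (L x t)) a u) a b).
  - apply locally_R; exists e; split; auto; intros u Hu.
    apply RInt_correct, (@ex_RInt_continuous R_CompleteNormedModule); intros t Ht.
    assert (Om (L x t)) by (apply (HS u); auto).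
    apply (continuity_2d_pt_snd (fun u v => h (L u v))).
    apply (continuity_2d_pt_plane Om); auto.
  - assert (Om (L x b)).
    { apply (HS b); [rewrite Rminus_diag, Rabs_R0; auto|].
      unfold Rmin, Rmax; destruct Rle_dec; lra. }
    apply (continuity_2d_pt_snd (fun u v => h (L u v))).
    apply (continuity_2d_pt_plane Om); auto.
Qed.

End PlaneIntegrals.

(** * Potentials along coordinate paths *)

Definition path_potential (x0 y0 z0 : R) (g : dir -> R3 -> R) (p : R3) : R :=
  let '(x, y, z) := p in
  RInt (fun s => g d1 (s, y0, z0)) x0 x + RInt (fun s => g d2 (x, s, z0)) y0 y
  + RInt (fun s => g d3 (x, y, s)) z0 z.

Ltac prove_nonexpanding2 :=
  intros u v u' v'; simpl; rewrite ?Rminus_diag, ?Rabs_R0;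
  pose proof (Rabs_pos (u - u')); pose proof (Rabs_pos (v - v'));
  unfold Rmax; repeat destruct Rle_dec; lra.

Lemma nonexpanding2_axis1 b c : nonexpanding2 (fun _ t => (t, b, c)).
Proof. prove_nonexpanding2. Qed.
Lemma nonexpanding2_plane12 c : nonexpanding2 (fun u t => (u, t, c)).
Proof. prove_nonexpanding2. Qed.
Lemma nonexpanding2_plane13 b : nonexpanding2 (fun u t => (u, b, t)).
Proof. prove_nonexpanding2. Qed.
Lemma nonexpanding2_plane23 a : nonexpanding2 (fun u t => (a, u, t)).
Proof. prove_nonexpanding2. Qed.

Lemma is_derive_plus3 (f1 f2 f3 : R -> R) x l1 l2 l3 l :
  is_derive f1 x l1 -> is_derive f2 x l2 -> is_derive f3 x l3 -> l1 + l2 + l3 = l ->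
  is_derive (fun u => f1 u + f2 u + f3 u) x l.
Proof.
  intros H1 H2 H3 <-; apply is_derive_Reals in H1, H2, H3; apply is_derive_Reals.
  exact (derivable_pt_lim_plus _ _ _ _ _ (derivable_pt_lim_plus _ _ _ _ _ H1 H2) H3).
Qed.

Lemma is_derive_const0 (c x : R) : is_derive (fun _ => c) x 0.
Proof. apply is_derive_Reals, derivable_pt_lim_const. Qed.

Section PathPotential.

Variables (Om : R3 -> Prop) (x0 y0 z0 : R) (g : dir -> R3 -> R) (D : dir -> dir -> R3 -> R).
Hypotheses (Om_open : openS Om) (segments : A_segments_in Om x0 y0 z0).
Hypothesis g_cont : forall k q, Om q -> contR_at Om (g k) q.
Hypothesis g_pd : forall k j q, Om q -> has_pdR (g k) q j (D k j q).
Hypothesis D_cont : forall k j q, Om q -> contR_at Om (D k j) q.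
Hypothesis D_sym : forall k j q, Om q -> D k j q = D j k q.

Lemma segments_near x y z : Om (x, y, z) -> exists e, 0 < e /\ forall a b c,
  Rabs (a - x) < e -> Rabs (b - y) < e -> Rabs (c - z) < e ->
  (forall s, Rmin x0 a <= s <= Rmax x0 a -> Om (s, y0, z0)) /\
  (forall s, Rmin y0 b <= s <= Rmax y0 b -> Om (a, s, z0)) /\
  (forall s, Rmin z0 c <= s <= Rmax z0 c -> Om (a, b, s)).
Proof.
  intros Hp; destruct (openS_box Om x y z Om_open Hp) as [e [He N]].
  exists e; split; auto; intros a b c Ha Hb Hc; apply segments, N; assumption.
Qed.

Lemma path_potential_pd1 x y z : Om (x, y, z) ->
  has_pdR (path_potential x0 y0 z0 g) (x, y, z) d1 (g d1 (x, y, z)).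
Proof.
  intros Hp; destruct (segments_near x y z Hp) as [e [He N]].
  assert (Z : forall a, Rabs (a - a) < e) by (intros; rewrite Rminus_diag, Rabs_R0; auto).
  destruct (segments x y z Hp) as [_ [S2 S3]].
  assert (E2 : RInt (fun t => D d2 d1 (x, t, z0)) y0 y = g d1 (x, y, z0) - g d1 (x, y0, z0)).
  { rewrite (RInt_ext _ (fun t => D d1 d2 (x, t, z0))) by (intros t Ht; apply D_sym, S2; lra).
    apply (RInt_plane_derive Om (fun u t => (u, t, z0)) Om_open (nonexpanding2_plane12 z0)
             (g d1)); auto.
    intros u t Ht; apply has_pdR_d2, g_pd; assumption. }
  assert (E3 : RInt (fun t => D d3 d1 (x, y, t)) z0 z = g d1 (x, y, z) - g d1 (x, y, z0)).
  { rewrite (RInt_ext _ (fun t => D d1 d3 (x, y, t))) by (intros t Ht; apply D_sym, S3; lra).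
    apply (RInt_plane_derive Om (fun u t => (u, y, t)) Om_open (nonexpanding2_plane13 y)
             (g d1)); auto.
    intros u t Ht; apply has_pdR_d3, g_pd; assumption. }
  apply has_pdR_d1; unfold path_potential; apply is_derive_plus3 with
    (l1 := g d1 (x, y0, z0)) (l2 := RInt (fun t => D d2 d1 (x, t, z0)) y0 y)
    (l3 := RInt (fun t => D d3 d1 (x, y, t)) z0 z).
  - apply (is_derive_RInt_plane_upper Om (fun _ t => (t, y0, z0)) Om_open
             (nonexpanding2_axis1 y0 z0) (g d1) 0 x0 x); auto.
    exists e; split; auto; intros u Hu; apply (N u y z Hu (Z y) (Z z)).
  - apply (is_derive_RInt_plane Om (fun u t => (u, t, z0)) Om_open (nonexpanding2_plane12 z0)
             (g d2) (D d2 d1)); auto.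
    + intros u t Ht; apply has_pdR_d1, g_pd; assumption.
    + exists e; split; auto; intros u Hu; apply (N u y z Hu (Z y) (Z z)).
  - apply (is_derive_RInt_plane Om (fun u t => (u, y, t)) Om_open (nonexpanding2_plane13 y)
             (g d3) (D d3 d1)); auto.
    + intros u t Ht; apply has_pdR_d1, g_pd; assumption.
    + exists e; split; auto; intros u Hu; apply (N u y z Hu (Z y) (Z z)).
  - rewrite E2, E3; ring.
Qed.

Lemma path_potential_pd2 x y z : Om (x, y, z) ->
  has_pdR (path_potential x0 y0 z0 g) (x, y, z) d2 (g d2 (x, y, z)).
Proof.
  intros Hp; destruct (segments_near x y z Hp) as [e [He N]].
  assert (Z : forall a, Rabs (a - a) < e) by (intros; rewrite Rminus_diag, Rabs_R0; auto).
  destruct (segments x y z Hp) as [_ [_ S3]].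
  assert (E3 : RInt (fun t => D d3 d2 (x, y, t)) z0 z = g d2 (x, y, z) - g d2 (x, y, z0)).
  { rewrite (RInt_ext _ (fun t => D d2 d3 (x, y, t))) by (intros t Ht; apply D_sym, S3; lra).
    apply (RInt_plane_derive Om (fun u t => (x, u, t)) Om_open (nonexpanding2_plane23 x)
             (g d2)); auto.
    intros u t Ht; apply has_pdR_d3, g_pd; assumption. }
  apply has_pdR_d2; unfold path_potential; apply is_derive_plus3 with
    (l1 := 0) (l2 := g d2 (x, y, z0)) (l3 := RInt (fun t => D d3 d2 (x, y, t)) z0 z).
  - apply is_derive_const0.
  - apply (is_derive_RInt_plane_upper Om (fun u t => (u, t, z0)) Om_open
             (nonexpanding2_plane12 z0) (g d2) x y0 y); auto.
    exists e; split; auto; intros u Hu; apply (N x u z (Z x) Hu (Z z)).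
  - apply (is_derive_RInt_plane Om (fun u t => (x, u, t)) Om_open (nonexpanding2_plane23 x)
             (g d3) (D d3 d2)); auto.
    + intros u t Ht; apply has_pdR_d2, g_pd; assumption.
    + exists e; split; auto; intros u Hu; apply (N x u z (Z x) Hu (Z z)).
  - rewrite E3; ring.
Qed.

Lemma path_potential_pd3 x y z : Om (x, y, z) ->
  has_pdR (path_potential x0 y0 z0 g) (x, y, z) d3 (g d3 (x, y, z)).
Proof.
  intros Hp; destruct (segments_near x y z Hp) as [e [He N]].
  assert (Z : forall a, Rabs (a - a) < e) by (intros; rewrite Rminus_diag, Rabs_R0; auto).
  apply has_pdR_d3; unfold path_potential; apply is_derive_plus3 with
    (l1 := 0) (l2 := 0) (l3 := g d3 (x, y, z)); [apply is_derive_const0..| |ring].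
  apply (is_derive_RInt_plane_upper Om (fun u t => (x, u, t)) Om_open
           (nonexpanding2_plane23 x) (g d3) y z0 z); auto.
  exists e; split; auto; intros u Hu; apply (N x y u (Z x) (Z y) Hu).
Qed.

Lemma path_potential_pd k p : Om p -> has_pdR (path_potential x0 y0 z0 g) p k (g k p).
Proof.
  destruct p as [[x y] z], k;
  [apply path_potential_pd1|apply path_potential_pd2|apply path_potential_pd3].
Qed.

End PathPotential.

Lemma locally_bounded_box Om (G : dir -> R3 -> R) x y z : openS Om -> Om (x, y, z) ->
  (forall k, contR_at Om (G k) (x, y, z)) ->
  exists r M, 0 < r /\ 0 < M /\ forall a b c,
    Rabs (a - x) < r -> Rabs (b - y) < r -> Rabs (c - z) < r ->
    Om (a, b, c) /\ forall k, Rabs (G k (a, b, c)) <= M.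
Proof.
  intros HO Hp HG.
  destruct (openS_box Om x y z HO Hp) as [e [He N]].
  destruct (HG d1 1 Rlt_0_1) as [r1 [Hr1 K1]].
  destruct (HG d2 1 Rlt_0_1) as [r2 [Hr2 K2]].
  destruct (HG d3 1 Rlt_0_1) as [r3 [Hr3 K3]].
  exists (Rmin e (Rmin r1 (Rmin r2 r3))),
    (Rabs (G d1 (x, y, z)) + Rabs (G d2 (x, y, z)) + Rabs (G d3 (x, y, z)) + 1).
  pose proof (Rmin_l e (Rmin r1 (Rmin r2 r3))); pose proof (Rmin_r e (Rmin r1 (Rmin r2 r3))).
  pose proof (Rmin_l r1 (Rmin r2 r3)); pose proof (Rmin_r r1 (Rmin r2 r3)).
  pose proof (Rmin_l r2 r3); pose proof (Rmin_r r2 r3).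
  pose proof (Rabs_pos (G d1 (x, y, z))); pose proof (Rabs_pos (G d2 (x, y, z))).
  pose proof (Rabs_pos (G d3 (x, y, z))).
  split; [repeat apply Rmin_pos; auto|split; [lra|]].
  intros a b c Ha Hb Hc.
  assert (Hq : Om (a, b, c)) by (apply N; lra).
  assert (Hd : forall r, Rmin e (Rmin r1 (Rmin r2 r3)) <= r -> dist3 (x, y, z) (a, b, c) < r)
    by (intros; apply dist3_lt; rewrite Rabs_minus_sym; lra).
  split; auto; intros k.
  destruct k; [specialize (K1 _ Hq (Hd r1 ltac:(lra)))|specialize (K2 _ Hq (Hd r2 ltac:(lra)))
              |specialize (K3 _ Hq (Hd r3 ltac:(lra)))];
  match goal with Hk : Rabs (?u - ?v) < 1 |- _ => pose proof (Rabs_triang_inv u v) end; lra.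
Qed.

(* Along the path (x,y,z) -> (a,y,z) -> (a,b,z) -> (a,b,c) each increment of [F] is
   bounded by the mean value inequality. *)
Lemma contR_at_of_partials Om (F : R3 -> R) (G : dir -> R3 -> R) p : openS Om ->
  (forall k q, Om q -> has_pdR F q k (G k q)) ->
  (forall k q, Om q -> contR_at Om (G k) q) ->
  Om p -> contR_at Om F p.
Proof.
  intros HO HF HG Hp eps Heps; destruct p as [[x y] z].
  destruct (locally_bounded_box Om G x y z HO Hp (fun k => HG k _ Hp))
    as [r [M [Hr [HM Box]]]].
  exists (Rmin r (eps / (3 * M))); split; [apply Rmin_pos; auto; apply Rdiv_lt_0_compat; lra|].
  intros [[a b] c] _ Hpq.
  apply dist3_lt_inv in Hpq; destruct Hpq as [Ha [Hb Hc]].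
  rewrite Rabs_minus_sym in Ha, Hb, Hc.
  pose proof (Rmin_l r (eps / (3 * M))); pose proof (Rmin_r r (eps / (3 * M))).
  assert (Z : forall u, Rabs (u - u) < r) by (intros; rewrite Rminus_diag, Rabs_R0; lra).
  assert (B3 : Rabs (F (a, b, c) - F (a, b, z)) <= M * Rabs (c - z)).
  { apply (bounded_variation (fun t => F (a, b, t)) (fun t => G d3 (a, b, t))).
    intros t Ht; destruct (Box a b t) as [Hq Bd]; try lra.
    split; [apply has_pdR_d3, HF, Hq|apply Bd]. }
  assert (B2 : Rabs (F (a, b, z) - F (a, y, z)) <= M * Rabs (b - y)).
  { apply (bounded_variation (fun t => F (a, t, z)) (fun t => G d2 (a, t, z))).
    intros t Ht; destruct (Box a t z) as [Hq Bd]; auto; try lra.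
    split; [apply has_pdR_d2, HF, Hq|apply Bd]. }
  assert (B1 : Rabs (F (a, y, z) - F (x, y, z)) <= M * Rabs (a - x)).
  { apply (bounded_variation (fun t => F (t, y, z)) (fun t => G d1 (t, y, z))).
    intros t Ht; destruct (Box t y z) as [Hq Bd]; auto; try lra.
    split; [apply has_pdR_d1, HF, Hq|apply Bd]. }
  assert (T : Rabs (F (a, b, c) - F (x, y, z)) <=
     Rabs (F (a, b, c) - F (a, b, z)) + Rabs (F (a, b, z) - F (a, y, z))
     + Rabs (F (a, y, z) - F (x, y, z))).
  { replace (F (a, b, c) - F (x, y, z)) with
      ((F (a, b, c) - F (a, b, z)) + (F (a, b, z) - F (a, y, z)) + (F (a, y, z) - F (x, y, z)))
      by ring.
    eapply Rle_trans; [apply Rabs_triang|]; apply Rplus_le_compat_r; apply Rabs_triang. }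
  assert (M * Rabs (c - z) < M * (eps / (3 * M))) by (apply Rmult_lt_compat_l; lra).
  assert (M * Rabs (b - y) < M * (eps / (3 * M))) by (apply Rmult_lt_compat_l; lra).
  assert (M * Rabs (a - x) < M * (eps / (3 * M))) by (apply Rmult_lt_compat_l; lra).
  assert (M * (eps / (3 * M)) = eps / 3) by (field; lra).
  lra.
Qed.

(** * Symmetry of second partial derivatives *)

Definition plane_shift (p : R3) (j k : dir) (u v : R) : R3 := shift (shift p j u) k v.

Lemma plane_shift0 p j k : plane_shift p j k 0 0 = p.
Proof. unfold plane_shift; rewrite !shift0; reflexivity. Qed.

Lemma is_derive_plane_shift_fst g p j k u v l : has_pdR g (plane_shift p j k u v) j l ->
  is_derive (fun s => g (plane_shift p j k s v)) u l.
Proof.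
  intros H; apply is_derive_Reals in H; apply is_derive_Reals.
  apply (derivable_pt_lim_translate (fun s => g (plane_shift p j k s v))); apply is_derive_Reals.
  apply (is_derive_ext (fun t => g (shift (plane_shift p j k u v) j t))); auto.
  intros t; unfold plane_shift; rewrite <- shift_add, shift_comm; reflexivity.
Qed.

Lemma is_derive_plane_shift_snd g p j k u v l : has_pdR g (plane_shift p j k u v) k l ->
  is_derive (fun s => g (plane_shift p j k u s)) v l.
Proof.
  intros H; apply is_derive_Reals in H; apply is_derive_Reals.
  apply (derivable_pt_lim_translate (fun s => g (plane_shift p j k u s))); apply is_derive_Reals.
  apply (is_derive_ext (fun t => g (shift (plane_shift p j k u v) k t))); auto.
  intros t; unfold plane_shift; rewrite shift_add; reflexivity.
Qed.

Lemma dist3_plane_shift p j k u v : dist3 p (plane_shift p j k u v) <= Rabs u + Rabs v.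
Proof.
  unfold plane_shift; eapply Rle_trans; [apply (dist3_triangle _ (shift p j u))|].
  rewrite !dist3_shift; lra.
Qed.

Section SecondDerivatives.

Variables (Om : R3 -> Prop) (f : R3 -> R) (Df : dir -> R3 -> R) (DDf : dir -> dir -> R3 -> R).
Variables (p : R3) (j k : dir) (e : R).
Hypothesis f_pd : forall k q, Om q -> has_pdR f q k (Df k q).
Hypothesis Df_pd : forall k j q, Om q -> has_pdR (Df k) q j (DDf k j q).
Hypothesis DDf_cont : forall k j q, Om q -> contR_at Om (DDf k j) q.
Hypothesis e_pos : 0 < e.
Hypothesis square_in : forall u v, Rabs u < e -> Rabs v < e -> Om (plane_shift p j k u v).

Let h u v := f (plane_shift p j k u v).

Lemma Rabs_lt_of_near u z : Rabs u < e / 2 -> Rabs (z - u) < e / 2 -> Rabs z < e.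
Proof.
  intros; pose proof (Rabs_triang (z - u) u); replace (z - u + u) with z in * by ring; lra.
Qed.

Lemma is_derive_Derive_plane_fst u v : Rabs u < e / 2 -> Rabs v < e / 2 ->
  is_derive (fun z => Derive (fun t => h z t) v) u (DDf k j (plane_shift p j k u v)).
Proof.
  intros Hu Hv; apply (is_derive_ext_loc (fun z => Df k (plane_shift p j k z v))).
  - apply locally_R; exists (e / 2); split; [lra|]; intros z Hz; symmetry.
    apply is_derive_unique, is_derive_plane_shift_snd, f_pd, square_in;
    [apply (Rabs_lt_of_near u)|]; lra.
  - apply is_derive_plane_shift_fst, Df_pd, square_in; lra.
Qed.

Lemma is_derive_Derive_plane_snd u v : Rabs u < e / 2 -> Rabs v < e / 2 ->
  is_derive (fun z => Derive (fun t => h t z) u) v (DDf j k (plane_shift p j k u v)).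
Proof.
  intros Hu Hv; apply (is_derive_ext_loc (fun z => Df j (plane_shift p j k u z))).
  - apply locally_R; exists (e / 2); split; [lra|]; intros z Hz; symmetry.
    apply is_derive_unique, is_derive_plane_shift_fst, f_pd, square_in;
    [|apply (Rabs_lt_of_near v)]; lra.
  - apply is_derive_plane_shift_snd, Df_pd, square_in; lra.
Qed.

Lemma continuity_2d_pt_DDf_plane a b :
  continuity_2d_pt (fun u v => DDf a b (plane_shift p j k u v)) 0 0.
Proof.
  assert (Hp : Om p)
    by (rewrite <- (plane_shift0 p j k); apply square_in; rewrite Rabs_R0; lra).
  intros eps; destruct (DDf_cont a b p Hp eps (cond_pos eps)) as [d [Hd K]].
  assert (Hde : 0 < Rmin d e / 2) by (apply Rdiv_lt_0_compat; [apply Rmin_pos|]; lra).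
  exists (mkposreal _ Hde); simpl; intros u v Hu Hv.
  rewrite Rminus_0_r in Hu, Hv; rewrite plane_shift0.
  pose proof (Rmin_l d e); pose proof (Rmin_r d e).
  apply K; [apply square_in; lra|].
  eapply Rle_lt_trans; [apply dist3_plane_shift|]; lra.
Qed.

Lemma DDf_sym_square : DDf k j p = DDf j k p.
Proof.
  assert (Z : Rabs 0 < e / 2) by (rewrite Rabs_R0; lra).
  rewrite <- (plane_shift0 p j k).
  rewrite <- (is_derive_unique _ _ _ (is_derive_Derive_plane_fst 0 0 Z Z)),
          <- (is_derive_unique _ _ _ (is_derive_Derive_plane_snd 0 0 Z Z)).
  apply Schwarz.
  - exists (mkposreal (e / 2) ltac:(lra)); simpl; intros u v Hu Hv.
    rewrite Rminus_0_r in Hu, Hv.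
    split; [|split; [|split]].
    + eexists; apply is_derive_plane_shift_fst, f_pd, square_in; lra.
    + eexists; apply is_derive_plane_shift_snd, f_pd, square_in; lra.
    + eexists; apply is_derive_Derive_plane_fst; assumption.
    + eexists; apply is_derive_Derive_plane_snd; assumption.
  - apply (continuity_2d_pt_ext_loc _ (fun u v => DDf k j (plane_shift p j k u v)));
      [|apply continuity_2d_pt_DDf_plane].
    exists (e / 2); split; [lra|]; intros u v Hu Hv; rewrite Rminus_0_r in Hu, Hv.
    apply is_derive_unique, is_derive_Derive_plane_fst; assumption.
  - apply (continuity_2d_pt_ext_loc _ (fun u v => DDf j k (plane_shift p j k u v)));
      [|apply continuity_2d_pt_DDf_plane].
    exists (e / 2); split; [lra|]; intros u v Hu Hv; rewrite Rminus_0_r in Hu, Hv.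
    apply is_derive_unique, is_derive_Derive_plane_snd; assumption.
Qed.

End SecondDerivatives.

Lemma second_partials_sym Om f Df DDf p j k : openS Om -> Om p ->
  (forall k q, Om q -> has_pdR f q k (Df k q)) ->
  (forall k j q, Om q -> has_pdR (Df k) q j (DDf k j q)) ->
  (forall k j q, Om q -> contR_at Om (DDf k j) q) ->
  DDf k j p = DDf j k p.
Proof.
  intros HO Hp Hf HDf HC; destruct (HO p Hp) as [e [He Hball]].
  apply (DDf_sym_square Om f Df DDf p j k (e / 2)); auto; [lra|].
  intros u v Hu Hv; apply Hball; eapply Rle_lt_trans; [apply dist3_plane_shift|]; lra.
Qed.

(** * Quaternion algebra *)

Lemma H_eq (a b : HC) : h0 a = h0 b -> h1 a = h1 b -> h2 a = h2 b -> h3 a = h3 b -> a = b.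
Proof. destruct a, b; simpl; intros; subst; reflexivity. Qed.

Definition comp (k : dir) (X : HC) : Cx :=
  match k with d1 => h1 X | d2 => h2 X | d3 => h3 X end.

Lemma Csum3_solve (f : dir -> Cx) a : Csum3 f = a -> f d1 = Csub (Csub a (f d2)) (f d3).
Proof. unfold Csum3; intros <-; ring. Qed.

Lemma Cx_eq_of_multiple (a b x s : Cx) : x = C0 -> Csub a b = Cmul s x -> a = b.
Proof.
  intros Hx E; transitivity (Cadd (Csub a b) b); [ring|]; rewrite E, Hx; ring.
Qed.

(* The scalar part of [D W + W (D phi / phi)] is [- div W - (W . grad phi) / phi]; its
   vector part is [curl W + (W x grad phi) / phi]. *)
Lemma dirac_vector_components (W : HC) (DW : dir -> HC) (g : dir -> Cx) (ph : Cx) :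
  h0 W = C0 -> (forall k, h0 (DW k) = C0) ->
  Hadd (Dsum DW) (Hmul W (Hmul (gradH g) (Hscalar (Cinv ph)))) = H0 ->
  Csum3 (fun k => comp k (DW k)) = Copp (Cdiv (Csum3 (fun k => Cmul (comp k W) (g k))) ph) /\
  forall i j, comp i (DW j) =
    Cadd (comp j (DW i)) (Cdiv (Csub (Cmul (comp i W) (g j)) (Cmul (comp j W) (g i))) ph).
Proof.
  intros HW0 HDW0 E.
  pose proof (f_equal h0 E) as E0; pose proof (f_equal h1 E) as E1;
  pose proof (f_equal h2 E) as E2; pose proof (f_equal h3 E) as E3.
  destruct W as [w0 w1 w2 w3]; cbn in HW0; subst w0.
  cbn [h0 h1 h2 h3 Hadd Hmul Dsum gradH Hscalar Hvec e1 e2 e3 H0] in E0, E1, E2, E3.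
  rewrite !HDW0 in E0, E1, E2, E3.
  unfold Cdiv, Csum3; split; [|intros [] []]; cbn [comp h1 h2 h3];
  first [ apply (Cx_eq_of_multiple _ _ _ C1 E0); ring
        | apply (Cx_eq_of_multiple _ _ _ (Copp C1) E0); ring
        | ring
        | apply (Cx_eq_of_multiple _ _ _ C1 E1); ring
        | apply (Cx_eq_of_multiple _ _ _ (Copp C1) E1); ring
        | apply (Cx_eq_of_multiple _ _ _ C1 E2); ring
        | apply (Cx_eq_of_multiple _ _ _ (Copp C1) E2); ring
        | apply (Cx_eq_of_multiple _ _ _ C1 E3); ring
        | apply (Cx_eq_of_multiple _ _ _ (Copp C1) E3); ring ].
Qed.

(* Components of [Q = - phi^-1 (grad phi + w / Phi)] and their derivatives. *)
Definition riccati_comp (ph b c P : Cx) : Cx := Cmul (Copp (Cinv ph)) (Cadd b (Cmul c (Cinv P))).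

Definition riccati_comp_deriv (ph b c P dph db dc dP : Cx) : Cx :=
  Cadd (Cmul (Copp (Copp (Cmul dph (Cmul (Cinv ph) (Cinv ph))))) (Cadd b (Cmul c (Cinv P))))
       (Cmul (Copp (Cinv ph))
             (Cadd db (Cadd (Cmul dc (Cinv P))
                            (Cmul c (Copp (Cmul dP (Cmul (Cinv P) (Cinv P)))))))).

Lemma has_pdC_riccati_comp ph b c P p k dph db dc dP :
  has_pdC ph p k dph -> has_pdC b p k db -> has_pdC c p k dc -> has_pdC P p k dP ->
  ph p <> C0 -> P p <> C0 ->
  has_pdC (fun q => riccati_comp (ph q) (b q) (c q) (P q)) p k
    (riccati_comp_deriv (ph p) (b p) (c p) (P p) dph db dc dP).
Proof.
  intros; apply has_pdC_mul; [apply has_pdC_opp, has_pdC_inv; assumption|].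
  apply has_pdC_add; [assumption|]; apply has_pdC_mul; [assumption|].
  apply has_pdC_inv; assumption.
Qed.

Section Proposition2.

Variables (Om : R3 -> Prop) (q phi : R3 -> Cx) (w : R3 -> HC).
Variables (dphi : dir -> R3 -> Cx) (ddphi : dir -> dir -> R3 -> Cx) (dw : dir -> dir -> R3 -> Cx).

Hypothesis Om_open : openS Om.
Hypothesis phi_neq0 : forall p, Om p -> phi p <> C0.
Hypothesis phi_cont : contC Om phi.
Hypothesis phi_pd : forall k p, Om p -> has_pdC phi p k (dphi k p).
Hypothesis dphi_cont : forall k, contC Om (dphi k).
Hypothesis dphi_pd : forall k j p, Om p -> has_pdC (dphi k) p j (ddphi k j p).
Hypothesis ddphi_cont : forall k j, contC Om (ddphi k j).
Hypothesis w_scalar0 : forall p, Om p -> h0 (w p) = C0.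
Hypothesis w_cont : forall k, contC Om (fun p => comp k (w p)).
Hypothesis w_pd : forall k j p, Om p -> has_pdC (fun p => comp k (w p)) p j (dw k j p).
Hypothesis dw_cont : forall k j, contC Om (dw k j).
Hypothesis laplace_phi : forall p, Om p -> Csum3 (fun k => ddphi k k p) = Cmul (q p) (phi p).
Hypothesis div_w : forall p, Om p ->
  Csum3 (fun k => dw k k p) = Copp (Cdiv (Csum3 (fun k => Cmul (comp k (w p)) (dphi k p))) (phi p)).
Hypothesis curl_w : forall p i j, Om p -> dw i j p =
  Cadd (dw j i p) (Cdiv (Csub (Cmul (comp i (w p)) (dphi j p)) (Cmul (comp j (w p)) (dphi i p)))
                        (phi p)).

Lemma ddphi_sym k j p : Om p -> ddphi k j p = ddphi j k p.
Proof.
  intros Hp; apply Cx_eq.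
  - apply (second_partials_sym Om (fun q => Re (phi q)) (fun k q => Re (dphi k q))
             (fun k j q => Re (ddphi k j q))); auto; intros * Hq.
    + apply (phi_pd _ _ Hq).
    + apply (dphi_pd _ _ _ Hq).
    + apply (contC_at_of _ _ _ (ddphi_cont _ _) Hq).
  - apply (second_partials_sym Om (fun q => Im (phi q)) (fun k q => Im (dphi k q))
             (fun k j q => Im (ddphi k j q))); auto; intros * Hq.
    + apply (phi_pd _ _ Hq).
    + apply (dphi_pd _ _ _ Hq).
    + apply (contC_at_of _ _ _ (ddphi_cont _ _) Hq).
Qed.

Definition psi (k : dir) (p : R3) : Cx := Cdiv (comp k (w p)) (phi p).

Definition dpsi (k j : dir) (p : R3) : Cx :=
  Cadd (Cdiv (dw k j p) (phi p))
       (Cmul (comp k (w p)) (Copp (Cmul (dphi j p) (Cmul (Cinv (phi p)) (Cinv (phi p)))))).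

Lemma psi_pd k j p : Om p -> has_pdC (psi k) p j (dpsi k j p).
Proof. intros Hp; apply has_pdC_mul; [|apply has_pdC_inv]; auto. Qed.

Lemma psi_cont k p : Om p -> contC_at Om (psi k) p.
Proof.
  intros Hp; apply contC_at_mul; [|apply contC_at_inv]; auto; apply contC_at_of; auto.
Qed.

Lemma dpsi_cont k j p : Om p -> contC_at Om (dpsi k j) p.
Proof.
  intros Hp; assert (Hinv : contC_at Om (fun q => Cinv (phi q)) p)
    by (apply contC_at_inv; auto; apply contC_at_of; auto).
  apply contC_at_add; apply contC_at_mul;
    [apply contC_at_of; auto|exact Hinv|apply contC_at_of; auto|].
  apply contC_at_opp, contC_at_mul; [apply contC_at_of; auto|apply contC_at_mul; exact Hinv].
Qed.

Lemma dpsi_sym k j p : Om p -> dpsi k j p = dpsi j k p.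
Proof.
  intros Hp; pose proof (phi_neq0 p Hp); unfold dpsi, Cdiv.
  rewrite (curl_w p k j Hp); unfold Cdiv; field; assumption.
Qed.

Variables (x0 y0 z0 : R) (c : Cx) (Phi : R3 -> Cx).
Hypothesis segments : A_segments_in Om x0 y0 z0.
Hypothesis Phi_A : is_A Om (psi d1) (psi d2) (psi d3) x0 y0 z0 c Phi.

Lemma Phi_path_potential p : Om p ->
  Re (Phi p) = path_potential x0 y0 z0 (fun k q => Re (psi k q)) p + Re c /\
  Im (Phi p) = path_potential x0 y0 z0 (fun k q => Im (psi k q)) p + Im c.
Proof.
  destruct p as [[x y] z]; intros Hp.
  destruct (Phi_A x y z Hp) as [v1 [v2 [v3 [[[pr1 R1] [pi1 I1]]
    [[[pr2 R2] [pi2 I2]] [[[pr3 R3] [pi3 I3]] ->]]]]]].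
  unfold path_potential; cbn [Re Im Cadd].
  rewrite <- R1, <- R2, <- R3, <- I1, <- I2, <- I3, <- (RInt_Reals _ _ _ pr1),
    <- (RInt_Reals _ _ _ pr2), <- (RInt_Reals _ _ _ pr3), <- (RInt_Reals _ _ _ pi1),
    <- (RInt_Reals _ _ _ pi2), <- (RInt_Reals _ _ _ pi3).
  split; reflexivity.
Qed.

Lemma Re_path_potential_pd k p : Om p ->
  has_pdR (path_potential x0 y0 z0 (fun k q => Re (psi k q))) p k (Re (psi k p)).
Proof.
  apply (path_potential_pd Om x0 y0 z0 (fun k q => Re (psi k q)) (fun k j q => Re (dpsi k j q))
           Om_open segments);
    intros * Hq.
  - apply (psi_cont _ _ Hq).
  - apply (psi_pd _ _ _ Hq).
  - apply (dpsi_cont _ _ _ Hq).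
  - rewrite dpsi_sym; auto.
Qed.

Lemma Im_path_potential_pd k p : Om p ->
  has_pdR (path_potential x0 y0 z0 (fun k q => Im (psi k q))) p k (Im (psi k p)).
Proof.
  apply (path_potential_pd Om x0 y0 z0 (fun k q => Im (psi k q)) (fun k j q => Im (dpsi k j q))
           Om_open segments);
    intros * Hq.
  - apply (psi_cont _ _ Hq).
  - apply (psi_pd _ _ _ Hq).
  - apply (dpsi_cont _ _ _ Hq).
  - rewrite dpsi_sym; auto.
Qed.

Lemma Phi_pd k p : Om p -> has_pdC Phi p k (psi k p).
Proof.
  intros Hp; split.
  - apply (has_pdR_open Om (fun q => path_potential x0 y0 z0 (fun k q => Re (psi k q)) q + Re c));
      auto; [intros r Hr; symmetry; apply (Phi_path_potential r Hr)|].
    eapply has_pdR_eq;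
      [apply has_pdR_plus; [apply Re_path_potential_pd, Hp|apply has_pdR_const]|ring].
  - apply (has_pdR_open Om (fun q => path_potential x0 y0 z0 (fun k q => Im (psi k q)) q + Im c));
      auto; [intros r Hr; symmetry; apply (Phi_path_potential r Hr)|].
    eapply has_pdR_eq;
      [apply has_pdR_plus; [apply Im_path_potential_pd, Hp|apply has_pdR_const]|ring].
Qed.

Lemma Phi_cont p : Om p -> contC_at Om Phi p.
Proof.
  intros Hp; split.
  - apply (contR_at_ext Om (fun q => path_potential x0 y0 z0 (fun k q => Re (psi k q)) q + Re c));
      auto; [intros r Hr; symmetry; apply (Phi_path_potential r Hr)|].
    apply contR_at_plus; [|apply contR_at_const].
    apply (contR_at_of_partials Om _ (fun k q => Re (psi k q))); auto.
    + intros; apply Re_path_potential_pd; assumption.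
    + intros k r Hr; apply (psi_cont k r Hr).
  - apply (contR_at_ext Om (fun q => path_potential x0 y0 z0 (fun k q => Im (psi k q)) q + Im c));
      auto; [intros r Hr; symmetry; apply (Phi_path_potential r Hr)|].
    apply contR_at_plus; [|apply contR_at_const].
    apply (contR_at_of_partials Om _ (fun k q => Im (psi k q))); auto.
    + intros; apply Im_path_potential_pd; assumption.
    + intros k r Hr; apply (psi_cont k r Hr).
Qed.

Definition W0 (p : R3) : Cx := Cmul (CofR (1/2)) (Cmul (phi p) (Phi p)).

Definition dW0 (k : dir) (p : R3) : Cx :=
  Cmul (CofR (1/2)) (Cadd (Cmul (dphi k p) (Phi p)) (Cmul (phi p) (psi k p))).

Definition ddW0 (k j : dir) (p : R3) : Cx :=
  Cmul (CofR (1/2))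
    (Cadd (Cadd (Cmul (ddphi k j p) (Phi p)) (Cmul (dphi k p) (psi j p)))
          (Cadd (Cmul (dphi j p) (psi k p)) (Cmul (phi p) (dpsi k j p)))).

Lemma W0_pd k p : Om p -> has_pdC W0 p k (dW0 k p).
Proof.
  intros Hp; eapply has_pdC_eq.
  - apply has_pdC_mul; [apply has_pdC_const|apply has_pdC_mul; [apply phi_pd|apply Phi_pd]; auto].
  - unfold dW0; ring.
Qed.

Lemma dW0_pd k j p : Om p -> has_pdC (dW0 k) p j (ddW0 k j p).
Proof.
  intros Hp; eapply has_pdC_eq.
  - apply has_pdC_mul; [apply has_pdC_const|]; apply has_pdC_add; apply has_pdC_mul;
      [apply dphi_pd|apply Phi_pd|apply phi_pd|apply psi_pd]; auto.
  - unfold ddW0; ring.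
Qed.

Lemma W0_schr_solution : schr_solution Om q W0.
Proof.
  assert (Hc : forall p, Om p -> contC_at Om phi p) by (intros; apply contC_at_of; auto).
  assert (Hdc : forall k p, Om p -> contC_at Om (dphi k) p) by (intros; apply contC_at_of; auto).
  assert (Hddc : forall k j p, Om p -> contC_at Om (ddphi k j) p)
    by (intros; apply contC_at_of; auto).
  split; [split; [|exists dW0; split; [exact W0_pd|intros k; split]]|].
  - apply contC_of_at; intros p Hp; apply contC_at_mul; [apply contC_at_const|].
    apply contC_at_mul; auto; apply Phi_cont; auto.
  - apply contC_of_at; intros p Hp; apply contC_at_mul; [apply contC_at_const|].
    apply contC_at_add; apply contC_at_mul; auto; [apply Phi_cont|apply psi_cont]; auto.
  - exists (ddW0 k); split; [intros j p Hp; apply dW0_pd; auto|intros j].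
    apply contC_of_at; intros p Hp; apply contC_at_mul; [apply contC_at_const|].
    apply contC_at_add; apply contC_at_add; apply contC_at_mul; auto;
      first [apply Phi_cont | apply psi_cont | apply dpsi_cont]; auto.
  - intros p Hp; exists dW0, (fun k => ddW0 k k p).
    split; [exact W0_pd|split; [intros k; apply dW0_pd; auto|]].
    pose proof (phi_neq0 p Hp).
    pose proof (Csum3_solve _ _ (laplace_phi p Hp)) as Hlap.
    pose proof (Csum3_solve _ _ (div_w p Hp)) as Hdiv.
    cbv beta in Hlap, Hdiv.
    unfold ddW0, W0, dpsi, psi, Cdiv; rewrite Hlap, Hdiv; unfold Cdiv, Csum3; field; assumption.
Qed.

Variable grad_phi : dir -> R3 -> Cx.
Hypothesis grad_phi_pd : forall k p, Om p -> has_pdC phi p k (grad_phi k p).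

Definition riccati_Q (p : R3) : HC :=
  Hmul (Hscalar (Copp (Cinv (phi p))))
       (Hadd (gradH (fun k => grad_phi k p)) (Hmul (w p) (Hscalar (Cinv (Phi p))))).

Definition dQ (i k : dir) (p : R3) : Cx :=
  riccati_comp_deriv (phi p) (dphi i p) (comp i (w p)) (Phi p)
                     (dphi k p) (ddphi i k p) (dw i k p) (psi k p).

Lemma grad_phi_eq k p : Om p -> grad_phi k p = dphi k p.
Proof. intros Hp; apply (has_pdC_unique phi p k); auto. Qed.

Lemma riccati_Q_scalar p : Om p -> h0 (riccati_Q p) = C0.
Proof. intros Hp; unfold riccati_Q; cbn; rewrite w_scalar0 by assumption; ring. Qed.

Lemma riccati_Q_comp i p : Om p ->
  comp i (riccati_Q p) = riccati_comp (phi p) (dphi i p) (comp i (w p)) (Phi p).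
Proof.
  intros Hp; rewrite <- grad_phi_eq by assumption.
  unfold riccati_Q, riccati_comp; destruct i; cbn; rewrite w_scalar0 by assumption; ring.
Qed.

Lemma riccati_Q_comp_pd i k p : Om p -> Phi p <> C0 ->
  has_pdC (fun r => comp i (riccati_Q r)) p k (dQ i k p).
Proof.
  intros Hp HPhi.
  apply (has_pdC_open Om (fun r => riccati_comp (phi r) (dphi i r) (comp i (w r)) (Phi r)));
    auto; [intros r Hr; symmetry; apply riccati_Q_comp, Hr|].
  apply has_pdC_riccati_comp; auto; apply Phi_pd; assumption.
Qed.

Lemma riccati_Q_pd k p : Om p -> Phi p <> C0 ->
  has_pdH riccati_Q p k (mkH C0 (dQ d1 k p) (dQ d2 k p) (dQ d3 k p)).
Proof.
  intros Hp HPhi; split; [|split; [|split]].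
  - apply (has_pdC_open Om (fun _ => C0)); auto; [|apply has_pdC_const].
    intros r Hr; symmetry; apply riccati_Q_scalar, Hr.
  - apply (riccati_Q_comp_pd d1 k p Hp HPhi).
  - apply (riccati_Q_comp_pd d2 k p Hp HPhi).
  - apply (riccati_Q_comp_pd d3 k p Hp HPhi).
Qed.

Lemma riccati_identity p : Om p -> Phi p <> C0 ->
  Hadd (Dsum (fun k => mkH C0 (dQ d1 k p) (dQ d2 k p) (dQ d3 k p)))
       (Hscalar (Csum3 (fun i =>
          Cmul (riccati_comp (phi p) (dphi i p) (comp i (w p)) (Phi p))
               (riccati_comp (phi p) (dphi i p) (comp i (w p)) (Phi p)))))
  = Hscalar (q p).
Proof.
  intros Hp HPhi; pose proof (phi_neq0 p Hp).
  pose proof (Csum3_solve _ _ (laplace_phi p Hp)) as Hlap.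
  pose proof (Csum3_solve _ _ (div_w p Hp)) as Hdiv.
  cbv beta in Hlap, Hdiv.
  apply H_eq; cbn [h0 h1 h2 h3 Hadd Hmul Dsum Hscalar e1 e2 e3 Hvec comp];
    unfold dQ, Csum3, riccati_comp, riccati_comp_deriv, psi, Cdiv.
  - rewrite Hdiv, Hlap; unfold Cdiv, Csum3; field; auto.
  - rewrite (curl_w p d3 d2), (ddphi_sym d3 d2) by assumption; unfold Cdiv; field; auto.
  - rewrite (curl_w p d1 d3), (ddphi_sym d1 d3) by assumption; unfold Cdiv; field; auto.
  - rewrite (curl_w p d2 d1), (ddphi_sym d2 d1) by assumption; unfold Cdiv; field; auto.
Qed.

Lemma riccati_Q_solution p : Om p -> Phi p <> C0 ->
  exists dQ : dir -> HC, (forall k, has_pdH riccati_Q p k (dQ k)) /\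
    Hadd (Dsum dQ) (Hscalar (Csum3 (fun i => Cmul (comp i (riccati_Q p)) (comp i (riccati_Q p)))))
    = Hscalar (q p).
Proof.
  intros Hp HPhi; exists (fun k => mkH C0 (dQ d1 k p) (dQ d2 k p) (dQ d3 k p)).
  split; [intros k; apply riccati_Q_pd; assumption|].
  rewrite <- (riccati_identity p Hp HPhi); unfold Csum3; rewrite !riccati_Q_comp by assumption.
  reflexivity.
Qed.

End Proposition2.

Lemma C2C_partials Om f : C2C Om f -> exists df ddf,
  contC Om f /\ (forall k p, Om p -> has_pdC f p k (df k p)) /\ (forall k, contC Om (df k)) /\
  (forall k j p, Om p -> has_pdC (df k) p j (ddf k j p)) /\ (forall k j, contC Om (ddf k j)).
Proof.
  intros [Hc [df [Hdf Hdf1]]].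
  destruct (Hdf1 d1) as [Hc1 [dd1 [Hdd1 Hddc1]]];
  destruct (Hdf1 d2) as [Hc2 [dd2 [Hdd2 Hddc2]]];
  destruct (Hdf1 d3) as [Hc3 [dd3 [Hdd3 Hddc3]]].
  exists df, (fun k => match k with d1 => dd1 | d2 => dd2 | d3 => dd3 end).
  split; [exact Hc|split; [exact Hdf|split; [|split]]]; intros []; auto.
Qed.

Lemma C1H_vector_partials Om w : C1H Om w -> exists dw,
  (forall k, contC Om (fun p => comp k (w p))) /\
  (forall k j p, Om p -> has_pdC (fun p => comp k (w p)) p j (dw k j p)) /\
  (forall k j, contC Om (dw k j)).
Proof.
  intros [_ [[Hc1 [dw1 [Hd1 Hdc1]]] [[Hc2 [dw2 [Hd2 Hdc2]]] [Hc3 [dw3 [Hd3 Hdc3]]]]]].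
  exists (fun k => match k with d1 => dw1 | d2 => dw2 | d3 => dw3 end).
  split; [|split]; intros []; auto.
Qed.

Lemma schr_solution_laplacian Om q f df ddf : openS Om -> schr_solution Om q f ->
  (forall k p, Om p -> has_pdC f p k (df k p)) ->
  (forall k j p, Om p -> has_pdC (df k) p j (ddf k j p)) ->
  forall p, Om p -> Csum3 (fun k => ddf k k p) = Cmul (q p) (f p).
Proof.
  intros HO [_ Hschr] Hdf Hddf p Hp.
  destruct (Hschr p Hp) as [df' [dd [Hdf' [Hdd E]]]].
  assert (Hdd_eq : forall k, dd k = ddf k k p).
  { intros k; apply (has_pdC_unique_open Om (df' k) (df k) p k); auto.
    intros r Hr; apply (has_pdC_unique f r k); auto. }
  apply (Cx_eq_of_multiple _ _ _ (Copp C1) E).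
  unfold Csum3; rewrite !Hdd_eq; ring.
Qed.

Lemma dirac_equation_components Om phi w dphi dw : openS Om ->
  (forall p, Om p -> h0 (w p) = C0) ->
  (forall k p, Om p -> has_pdC phi p k (dphi k p)) ->
  (forall k j p, Om p -> has_pdC (fun p => comp k (w p)) p j (dw k j p)) ->
  (forall p, Om p -> exists (dw' : dir -> HC) (dphi' : dir -> Cx),
      (forall k, has_pdH w p k (dw' k)) /\ (forall k, has_pdC phi p k (dphi' k)) /\
      Hadd (Dsum dw') (Hmul (w p) (Hmul (gradH dphi') (Hscalar (Cinv (phi p))))) = H0) ->
  forall p, Om p ->
    Csum3 (fun k => dw k k p) =
      Copp (Cdiv (Csum3 (fun k => Cmul (comp k (w p)) (dphi k p))) (phi p)) /\
    forall i j, dw i j p = Cadd (dw j i p)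
      (Cdiv (Csub (Cmul (comp i (w p)) (dphi j p)) (Cmul (comp j (w p)) (dphi i p))) (phi p)).
Proof.
  intros HO Hw0 Hphi Hw Hdirac p Hp.
  destruct (Hdirac p Hp) as [dw' [dphi' [Hdw' [Hdphi' E]]]].
  assert (Hdphi_eq : forall k, dphi' k = dphi k p)
    by (intros k; apply (has_pdC_unique phi p k); auto).
  assert (Hdw_eq : forall i j, comp i (dw' j) = dw i j p).
  { intros i j; destruct (Hdw' j) as [_ [H1 [H2 H3]]].
    apply (has_pdC_unique (fun r => comp i (w r)) p j); [destruct i; assumption|auto]. }
  assert (Hdw0 : forall k, h0 (dw' k) = C0).
  { intros k; apply (has_pdC_unique_open Om (fun r => h0 (w r)) (fun _ => C0) p k); auto.
    - apply (proj1 (Hdw' k)).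
    - apply has_pdC_const. }
  destruct (dirac_vector_components (w p) dw' dphi' (phi p) (Hw0 p Hp) Hdw0 E)
    as [Hdiv Hcurl].
  unfold Csum3 in *; rewrite !Hdw_eq, !Hdphi_eq in Hdiv; split; [exact Hdiv|].
  intros i j; specialize (Hcurl i j); rewrite !Hdw_eq, !Hdphi_eq in Hcurl; exact Hcurl.
Qed.

Theorem proposition2
  (Om : R3 -> Prop) (q phi : R3 -> Cx) (w : R3 -> HC) (x0 y0 z0 : R) :
  is_domain Om ->
  contC Om q ->
  schr_solution Om q phi ->
  (forall p, Om p -> phi p <> C0) ->
  C1H Om w ->
  (forall p, Om p -> h0 (w p) = C0) ->
  (forall p, Om p -> exists (dw : dir -> HC) (dphi : dir -> Cx),
      (forall k, has_pdH w p k (dw k)) /\ (forall k, has_pdC phi p k (dphi k)) /\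
      Hadd (Dsum dw) (Hmul (w p) (Hmul (gradH dphi) (Hscalar (Cinv (phi p))))) = H0) ->
  Om (x0, y0, z0) ->
  A_segments_in Om x0 y0 z0 ->
  forall (c : Cx) (Phi : R3 -> Cx),
    is_A Om (fun p => Cmul (h1 (w p)) (Cinv (phi p)))
            (fun p => Cmul (h2 (w p)) (Cinv (phi p)))
            (fun p => Cmul (h3 (w p)) (Cinv (phi p))) x0 y0 z0 c Phi ->
    schr_solution Om q (fun p => Cmul (CofR (1/2)) (Cmul (phi p) (Phi p))) /\
    (forall dphi : dir -> R3 -> Cx,
      (forall k p, Om p -> has_pdC phi p k (dphi k p)) ->
      let Q := fun p =>
        Hmul (Hscalar (Copp (Cinv (phi p))))
             (Hadd (gradH (fun k => dphi k p)) (Hmul (w p) (Hscalar (Cinv (Phi p))))) in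
      forall p, Om p -> Phi p <> C0 ->
        exists dQ : dir -> HC,
          (forall k, has_pdH Q p k (dQ k)) /\
          Hadd (Dsum dQ)
               (Hscalar (Cadd (Cadd (Cmul (h1 (Q p)) (h1 (Q p))) (Cmul (h2 (Q p)) (h2 (Q p))))
                              (Cmul (h3 (Q p)) (h3 (Q p))))) = Hscalar (q p)).
Proof.
  intros [HO _] _ Hschr Hnz Hw Hw0 Hdirac _ Hseg c Phi HPhi.
  destruct (C2C_partials _ _ (proj1 Hschr))
    as [dphi [ddphi [Hc [Hd [Hdc [Hdd Hddc]]]]]].
  destruct (C1H_vector_partials _ _ Hw) as [dw [Hwc [Hdw Hdwc]]].
  pose proof (schr_solution_laplacian _ _ _ _ _ HO Hschr Hd Hdd) as Hlap.
  pose proof (dirac_equation_components _ _ _ _ _ HO Hw0 Hd Hdw Hdirac) as Hrel.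
  assert (Hdiv := fun p Hp => proj1 (Hrel p Hp)).
  assert (Hcurl := fun p i j Hp => proj2 (Hrel p Hp) i j).
  split.
  - apply W0_schr_solution with (w := w) (dphi := dphi) (ddphi := ddphi) (dw := dw)
      (x0 := x0) (y0 := y0) (z0 := z0) (c := c); auto.
  - intros grad_phi Hgrad Q p Hp HPhi0.
    apply riccati_Q_solution with (Om := Om) (w := w) (Phi := Phi) (dphi := dphi)
      (ddphi := ddphi) (dw := dw) (x0 := x0) (y0 := y0) (z0 := z0) (c := c); auto.
Qed.
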